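(* Consider the multirate closed loop described in the context, with high-rate LTI plant $P_h$, low-rate LTI controller $K_l$, downsampler $\mathcal{S}_d$ and multirate zero-order-hold $\mathcal{H}_u$ (downsampling/upsampling factor $F\in\mathbb{N}$), and the LPTV closed-loop operators $$J_{LPTV}=\left(I+P_h\mathcal{H}_uK_l\mathcal{S}_d\right)^{-1}P_h,\qquad S_{LPTV}=\left(I+\mathcal{H}_uK_l\mathcal{S}_d P_h\right)^{-1},$$ so that $y_h=J_{LPTV}r_h$ and $u_h=S_{LPTV}r_h$. Let $\underline{J}=\mathcal{L}J_{LPTV}\mathcal{L}^{-1}$, $\underline{S}=\mathcal{L}S_{LPTV}\mathcal{L}^{-1}$, $\underline{P}=\mathcal{L}P_h\mathcal{L}^{-1}$ be the time-lifted representations and $\tilde{J}(z)=M(z)\underline{J}(z^F)M^{-1}(z)$, $\tilde{S}(z)=M(z)\underline{S}(z^F)M^{-1}(z)$, $\tilde{P}(z)=M(z)\underline{P}(z^F)M^{-1}(z)$ the frequency-lifted representations. Then $$\underline{P}=\underline{J}\,\underline{S}^{-1},\qquad \tilde{P}=\tilde{J}\,\tilde{S}^{-1}.$$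
   Context: All systems are discrete-time. The plant $P_h$ is a linear time-invariant (LTI) system operating at the high sampling rate with sampling time $h_h$; the controller $K_l$ is an LTI system operating at the low rate with sampling time $h_l=Fh_h$, $F\in\mathbb{N}$. The downsampler $\mathcal{S}_d$ maps a high-rate signal $\nu_h$ to the low-rate signal $\nu_l[l]=\nu_h[lF]$; the multirate zero-order-hold $\mathcal{H}_u$ maps a low-rate signal $\nu_l$ to the high-rate signal $\nu_h[t]=\nu_l[\lfloor t/F\rfloor]$. The closed loop is assumed well posed, so the inverses in $J_{LPTV}$ and $S_{LPTV}$ exist. The resulting operators are linear periodically time-varying (LPTV) with period $F$. The time-lifting operator $\mathcal{L}$ maps a signal $\nu_h[t]\in\mathbb{R}^{n}$ to $\underline{\nu}[l]=\begin{bmatrix}\nu_h^\top[lF] & \nu_h^\top[lF+1] & \cdots & \nu_h^\top[lF+F-1]\end{bmatrix}^\top\in\mathbb{R}^{Fn}$; it is invertible, and for an $F$-periodic LPTV operator $G$, $\mathcal{L}G\mathcal{L}^{-1}$ is LTI. With $z=e^{j\omega}$ and $\phi=e^{j2\pi/F}$, $M(z)$ is the $F\times F$ block matrix whose $(i,k)$ block ($i,k=0,\dots,F-1$) is $(z\phi^{i})^{-k}I$. *)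

From HB Require Import structures.
From mathcomp Require Import all_boot all_order all_algebra.
From mathcomp Require Import all_classical all_reals all_analysis.
From mathcomp Require Import complex.
Set Implicit Arguments. Unset Strict Implicit. Unset Printing Implicit Defensive.
Import Order.TTheory GRing.Theory Num.Theory.
Import numFieldNormedType.Exports.
Local Open Scope ring_scope.

(** Discrete-time (one-sided, zero initial conditions) real vector signals. *)
Definition signal (R : realType) (n : nat) := nat -> 'cV[R]_n.

Definition sig_add (R : realType) n (u v : signal R n) : signal R n := fun t => u t + v t.

Definition lticonv (R : realType) m n (g : nat -> 'M[R]_(n, m)) (u : signal R m) : signal R n :=
  fun t => \sum_(i < t.+1) g i *m u (t - i)%N.

Definition downs (R : realType) n (F : nat) (v : signal R n) : signal R n := fun l => v (l * F)%N.

Definition mzoh (R : realType) n (F : nat) (v : signal R n) : signal R n := fun t => v (t %/ F)%N.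

Definition loopY (R : realType) nu ny (F : nat)
  (p : nat -> 'M[R]_(ny, nu)) (k : nat -> 'M[R]_(nu, ny)) : signal R ny -> signal R ny :=
  fun y => sig_add y (lticonv p (mzoh F (lticonv k (downs F y)))).

Definition loopU (R : realType) nu ny (F : nat)
  (p : nat -> 'M[R]_(ny, nu)) (k : nat -> 'M[R]_(nu, ny)) : signal R nu -> signal R nu :=
  fun u => sig_add u (mzoh F (lticonv k (downs F (lticonv p u)))).

(** Time lifting L : lifted[l] = [v[lF]; v[lF+1]; ...; v[lF+F-1]] in R^(F n).
    (mxvec stacks the rows of an F x n matrix, row i first, i.e. index i*n+j.) *)
Definition tlift (R : realType) n (F : nat) (v : signal R n) : signal R (F * n) :=
  fun l => (mxvec (\matrix_(i < F, j < n) v (l * F + i)%N j ord0))^T.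

Definition tunlift (R : realType) n (F : nat) (HF : (0 < F)%N) (w : signal R (F * n)) : signal R n :=
  fun t => (row (Ordinal (ltn_pmod t HF)) (vec_mx (w (t %/ F)%N)^T))^T.

Definition liftop (R : realType) m n (F : nat) (HF : (0 < F)%N)
  (G : signal R m -> signal R n) : signal R (F * m) -> signal R (F * n) :=
  fun w => tlift F (G (tunlift HF w)).

(** For causal LTI operators this determines the operator. *)
Definition impulse (R : realType) m (j : 'I_m) : signal R m :=
  fun t => if t == 0%N then delta_mx j ord0 else 0.

Definition impresp (R : realType) m n (G : signal R m -> signal R n) (k : nat) : 'M[R]_(n, m) :=
  \matrix_(i < n, j < m) G (impulse R j) k i ord0.

Definition ztr_abs (R : realType) m n (g : nat -> 'M[R]_(n, m)) (z : R[i]) : Prop :=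
  forall i j, cvgn (series (fun k => (`| (g k i j)%:C%C * z ^- k | : (R[i])^o))).

Definition ztr (R : realType) m n (g : nat -> 'M[R]_(n, m)) (z : R[i]) : 'M[R[i]]_(n, m) :=
  \matrix_(i, j) limn (series (fun k => ((g k i j)%:C%C * z ^- k : (R[i])^o))).

Definition expj (R : realType) (theta : R) : R[i] := (cos theta +i* sin theta)%C.

(** M(z): F x F block matrix with (i,k) block (z phi^i)^{-k} I_n, phi = e^{j 2 pi / F};
    flattened index a = i*n + p (same layout as [tlift]). *)
Definition Mz (R : realType) (F n : nat) (z : R[i]) : 'M[R[i]]_(F * n) :=
  \matrix_(a, b) ((z * expj (2 * pi / F%:R) ^+ (a %/ n)%N) ^- (b %/ n)%N
                  * ((a %% n)%N == (b %% n)%N)%:R).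

Definition freqlift (R : realType) m n (F : nat) (HF : (0 < F)%N)
  (G : signal R m -> signal R n) (z : R[i]) : 'M[R[i]]_(F * n, F * m) :=
  Mz F n z *m ztr (impresp (liftop HF G)) (z ^+ F) *m invmx (Mz F m z).

From HB Require Import structures.
From mathcomp Require Import all_boot all_order all_algebra.
From mathcomp Require Import all_classical all_reals all_analysis.
From mathcomp Require Import complex.
From mathcomp Require Import zify.
Import Order.TTheory GRing.Theory Num.Theory.
Import numFieldNormedType.Exports.
Local Open Scope ring_scope.
Local Open Scope classical_set_scope.
Set Implicit Arguments. Unset Strict Implicit. Unset Printing Implicit Defensive.

(* The loop identity P_h (I + H_u K_l S_d P_h) = (I + P_h H_u K_l S_d) P_h, pushed through
   the two inverses, gives J_LPTV = P_h S_LPTV; lifting in time, J_ = P_ S_, i.e.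
   P_ = J_ S_^-1.  The time-lifted plant is again linear, causal and time invariant, hence
   it acts by convolution with its own impulse response, and the impulse response of J_
   is the convolution of those of P_ and S_.  Under absolute convergence the z-transform
   turns this convolution into a product (Cauchy product of series), and conjugation by
   M(z) preserves products, so J~ = P~ S~. *)

Lemma sum_antidiag (V : nmodType) (f : nat -> nat -> V) N :
  \sum_(0 <= k < N) \sum_(i < k.+1) f i (k - i)%N =
  \sum_(0 <= i < N) \sum_(0 <= j < N - i) f i j.
Proof.
elim: N => [|N IH]; first by rewrite !big_geq.
rewrite big_nat_recr //= IH big_ord_recr /= subnn [RHS]big_nat_recr //= subSnn big_nat1.
rewrite addrA -(big_mkord xpredT (fun i => f i (N - i)%N)) -big_split /=; congr (_ + _).
by apply: eq_big_nat => i /andP[_ iN]; rewrite subSn 1?ltnW // big_nat_recr.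
Qed.

Section CauchyProduct.
Variable K : numFieldType.
Implicit Types a b : nat -> K.

Definition cauchy_product a b k := \sum_(i < k.+1) a i * b (k - i)%N.

Lemma series_mul_cauchy a b N :
  series a N * series b N =
  series (cauchy_product a b) N + \sum_(0 <= i < N) \sum_(N - i <= j < N) a i * b j.
Proof.
rewrite /series /cauchy_product /= mulr_suml (sum_antidiag (fun i j => a i * b j)).
rewrite -big_split /=; apply: eq_bigr => i _.
by rewrite mulr_sumr -big_cat_nat ?leq_subr.
Qed.

(* The square [0, N/2)^2 lies in the triangle i + j < N. *)
Lemma series_sqr_le_cauchy a b N : (forall k, 0 <= a k) -> (forall k, 0 <= b k) ->
  series a (N %/ 2)%N * series b (N %/ 2)%N <= series (cauchy_product a b) N.
Proof.
move=> a0 b0; rewrite /series /cauchy_product /= mulr_suml.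
rewrite (sum_antidiag (fun i j => a i * b j)).
have ab0 i j : 0 <= a i * b j by rewrite mulr_ge0.
rewrite [leRHS](big_cat_nat _ (n := (N %/ 2)%N)) //=; last by lia.
rewrite -[leLHS]addr0 lerD ?sumr_ge0 // => [|i _]; last exact: sumr_ge0.
apply: ler_sum_nat => i /andP[_ iN]; rewrite mulr_sumr.
rewrite [leRHS](big_cat_nat _ (n := (N %/ 2)%N)) //=; last by lia.
by rewrite lerDl sumr_ge0.
Qed.

Lemma cauchy_product_err_le a b N :
  `|series a N * series b N - series (cauchy_product a b) N| <=
  series (fun k => `|a k|) N * series (fun k => `|b k|) N -
  series (fun k => `|a k|) (N %/ 2)%N * series (fun k => `|b k|) (N %/ 2)%N.
Proof.
rewrite series_mul_cauchy addrC addKr series_mul_cauchy addrAC -[leLHS]add0r.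
apply: lerD; first by rewrite subr_ge0 series_sqr_le_cauchy.
apply: le_trans (ler_norm_sum _ _ _) _; apply: ler_sum_nat => i _.
apply: le_trans (ler_norm_sum _ _ _) _; apply: ler_sum_nat => j _.
by rewrite normrM.
Qed.

Lemma cvg_cauchy_product a b :
  cvgn (series a) -> cvgn (series b) ->
  cvgn (series (fun k => `|a k|)) -> cvgn (series (fun k => `|b k|)) ->
  series (cauchy_product a b) @ \oo --> limn (series a) * limn (series b).
Proof.
move=> ca cb cna cnb.
pose A := series (fun k => `|a k|); pose B := series (fun k => `|b k|).
pose bound N := A N * B N - A (N %/ 2)%N * B (N %/ 2)%N.
have bound0 : bound @ \oo --> 0.
  rewrite -(subrr (limn A * limn B)); apply: cvgB; first exact: cvgM.
  have half := @cvg_divnr 2 isT.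
  exact: cvgM (cvg_comp _ _ half cna) (cvg_comp _ _ half cnb).
pose err N := series a N * series b N - series (cauchy_product a b) N.
have err0 : err @ \oo --> 0.
  apply/cvgr0Pnorm_le => e e0; near=> N.
  apply: le_trans (cauchy_product_err_le a b N) _.
  have bound_ge0 : 0 <= bound N := le_trans (normr_ge0 _) (cauchy_product_err_le a b N).
  by rewrite -[leLHS]/(bound N) -(ger0_norm bound_ge0); near: N; exact: cvgr0_norm_le.
suff -> : series (cauchy_product a b) = (fun N => series a N * series b N - err N).
  by rewrite -[X in _ --> X]subr0; apply: cvgB => //; exact: cvgM.
by apply/funext => N; rewrite /err opprB addrC subrK.
Unshelve. all: by end_near.
Qed.

End CauchyProduct.

Section ComplexSeries.
Variable R : realType.
Local Open Scope complex_scope.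
Local Notation C := (R[i]).
Local Notation Re := (@complex.Re R).
Local Notation Im := (@complex.Im R).

Lemma ReB (x y : C) : Re (x - y) = Re x - Re y.
Proof. exact: (raddfB (Re : Rcomplex R -> R)). Qed.

Lemma ImB (x y : C) : Im (x - y) = Im x - Im y.
Proof. exact: (raddfB (Im : Rcomplex R -> R)). Qed.

Lemma Re_series (u : nat -> C) N : Re (series u N) = series (Re \o u) N.
Proof. exact: (raddf_sum (Re : Rcomplex R -> R)). Qed.

Lemma Im_series (u : nat -> C) N : Im (series u N) = series (Im \o u) N.
Proof. exact: (raddf_sum (Im : Rcomplex R -> R)). Qed.

Lemma normc_ge_Im (z : C) : `|Im z|%:C <= `|z|.
Proof. by rewrite normc_def lecR -sqrtr_sqr ler_wsqrtr // lerDr sqr_ge0. Qed.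

Lemma normc_le_Re_Im (z : C) : `|z| <= (`|Re z| + `|Im z|)%:C.
Proof.
rewrite normc_def lecR -[leRHS]ger0_norm ?addr_ge0 // -sqrtr_sqr ler_wsqrtr //.
rewrite sqrrD -(real_normK (num_real (Re z))) -(real_normK (num_real (Im z))).
by rewrite -addrA lerD2l lerDr mulrn_wge0 // mulr_ge0.
Qed.

Lemma cvg_ReIm (u : nat -> C^o) (l : C^o) :
  u @ \oo --> l <-> Re \o u @ \oo --> Re l /\ Im \o u @ \oo --> Im l.
Proof.
split=> [ul | [/cvgrPdist_lt ul_Re /cvgrPdist_lt ul_Im]].
  have proj (f : C -> R) : (forall x y, f (x - y) = f x - f y) ->
      (forall x, `|f x|%:C <= `|x|) -> f \o u @ \oo --> f l.
    move=> fB f_le; apply/cvgrPdist_lt => e e0.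
    move/cvgrPdist_lt: ul => /(_ e%:C); rewrite ltcR => /(_ e0).
    by apply: filterS => n; rewrite -ltcR -fB; exact: le_lt_trans.
  by split; apply: proj; [exact: ReB | exact: normc_ge_Re | exact: ImB | exact: normc_ge_Im].
apply/cvgrPdist_lt => -[e e'] /[!ltcE] /= /andP[/eqP -> e0].
have e20 : 0 < e / 2 by rewrite divr_gt0.
near=> n; apply: le_lt_trans (normc_le_Re_Im _) _.
rewrite ltcR ReB ImB [ltRHS]splitr ltrD //.
  by near: n; exact: ul_Re.
by near: n; exact: ul_Im.
Unshelve. all: by end_near.
Qed.

(* [R[i]^o] is not a complete normed space in the library, so absolute convergence is
   transferred through the real and imaginary parts, which are dominated by the modulus. *)
Lemma normed_cvg_complex (a : nat -> C^o) :
  cvgn (series (fun k => `|a k|)) -> cvgn (series a).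
Proof.
move=> /cvg_ex[L /cvg_ReIm[L_Re _]].
have norm_cvg : cvgn (series (fun k => Re `|a k|)).
  apply/cvg_ex; exists (Re L).
  suff -> : series (fun k => Re `|a k|) = Re \o series (fun k => `|a k|) by [].
  by apply/funext => N; rewrite /= Re_series.
have dominated (f : C -> R) : (forall x, `|f x|%:C <= `|x|) -> cvgn (series (f \o a)).
  move=> f_le; apply: normed_cvg; apply: series_le_cvg norm_cvg => k.
  - exact: normr_ge0.
  - by rewrite normc_def /= sqrtr_ge0.
  - by rewrite -lecR (le_trans (f_le _)) // [leRHS]normc_def.
have [cRe cIm] := (dominated _ (@normc_ge_Re R), dominated _ normc_ge_Im).
apply/cvg_ex; exists (limn (series (Re \o a)) +i* limn (series (Im \o a))).
apply/cvg_ReIm; split.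
  suff -> : Re \o series a = series (Re \o a) by [].
  by apply/funext => N; rewrite /= Re_series.
suff -> : Im \o series a = series (Im \o a) by [].
by apply/funext => N; rewrite /= Im_series.
Qed.

End ComplexSeries.

Section ZTransform.
Variable R : realType.
Local Open Scope complex_scope.

Definition mxconv m n p (A : nat -> 'M[R]_(m, n)) (B : nat -> 'M[R]_(n, p)) k : 'M[R]_(m, p) :=
  \sum_(i < k.+1) A i *m B (k - i)%N.

Lemma ztr_mxconv m n p (A : nat -> 'M[R]_(m, n)) (B : nat -> 'M[R]_(n, p)) (w : R[i]) :
  ztr_abs A w -> ztr_abs B w -> ztr (mxconv A B) w = ztr A w *m ztr B w.
Proof.
move=> cA cB; apply/matrixP => x y; rewrite !mxE.
pose a l k : R[i]^o := (A k x l)%:C * w ^- k.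
pose b l k : R[i]^o := (B k l y)%:C * w ^- k.
have -> : (fun k => ((mxconv A B k x y)%:C * w ^- k : R[i]^o)) =
    fun k => \sum_l cauchy_product (a l) (b l) k.
  apply/funext => k; rewrite exchange_big summxE rmorph_sum mulr_suml /=.
  apply: eq_bigr => i _; rewrite mxE rmorph_sum mulr_suml; apply: eq_bigr => l _.
  rewrite rmorphM mulrACA -invfM -exprD subnKC //; exact: ltnSE.
have -> : series (fun k => \sum_l cauchy_product (a l) (b l) k) =
    fun N => \sum_l series (cauchy_product (a l) (b l)) N.
  by apply/funext => N; rewrite /series /= exchange_big.
under [RHS]eq_bigr do rewrite !mxE.
apply: (cvg_lim (@norm_hausdorff _ (R[i]^o))).
apply: (@cvg_big _ _ +%R 0 xpredT (@add_continuous R[i]^o)) => // l _.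
have [ca cb] := (cA x l, cB l y).
apply: cvg_cauchy_product.
- exact: (normed_cvg_complex ca).
- exact: (normed_cvg_complex cb).
- exact: ca.
- exact: cb.
Qed.

End ZTransform.

Section Signals.
Variable R : realType.

Definition delay n d (u : signal R n) : signal R n :=
  fun t => if (t < d)%N then 0 else u (t - d)%N.

Definition pulse n (x : 'cV[R]_n) : signal R n := fun t => if t == 0%N then x else 0.

Definition causal m n (G : signal R m -> signal R n) :=
  forall u v k, (forall t, (t <= k)%N -> u t = v t) -> G u k = G v k.

Definition time_invariant m n (G : signal R m -> signal R n) :=
  forall d u t, G (delay d u) (t + d)%N = G u t.

Lemma lticonv_is_linear m n (g : nat -> 'M[R]_(n, m)) : linear (lticonv g).
Proof.
move=> a u v; rewrite !fctE; apply/funext => t.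
rewrite /lticonv scaler_sumr -big_split /=.
by apply: eq_bigr => i _; rewrite mulmxDr scalemxAr.
Qed.

HB.instance Definition _ m n (g : nat -> 'M[R]_(n, m)) :=
  GRing.isLinear.Build R (signal R m) (signal R n) _ (lticonv g) (lticonv_is_linear g).

Lemma lticonv_causal m n (g : nat -> 'M[R]_(n, m)) : causal (lticonv g).
Proof. by move=> u v k uv; apply: eq_bigr => i _; rewrite uv ?leq_subr. Qed.

Lemma lticonv_time_invariant m n (g : nat -> 'M[R]_(n, m)) : time_invariant (lticonv g).
Proof.
move=> d u t; rewrite /lticonv (big_ord_widen (t + d).+1 (fun i => g i *m u (t - i)%N)).
  rewrite [RHS]big_mkcond /=; apply: eq_bigr => i _; rewrite /delay; have ilt := ltn_ord i.
  case: ltnP => [ltd | ged]; first by rewrite ifF ?mulmx0 //; lia.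
  by rewrite ifT; [congr (_ *m u _) | ]; lia.
by rewrite ltnS leq_addr.
Qed.

Section LTI.
Variables (m n : nat) (G : {linear signal R m -> signal R n}).
Hypotheses (G_causal : causal G) (G_ti : time_invariant G).

Lemma pulse_impresp (x : 'cV[R]_m) k : G (pulse x) k = impresp G k *m x.
Proof.
have -> : pulse x = \sum_j x j 0 *: impulse R j.
  rewrite fct_sumE; apply/funext => t; under eq_bigr do rewrite scalrfctE /=.
  rewrite /pulse /impulse; case: eqP => _; last first.
    by rewrite big1 // => j _; rewrite scaler0.
  apply/colP => i; rewrite summxE (bigD1 i) //= big1 => [|j ji].
    by rewrite !mxE !eqxx mulr1 addr0.
  by rewrite !mxE [i == j]eq_sym (negbTE ji) mulr0.
rewrite linear_sum fct_sumE; apply/colP => i; rewrite summxE mxE.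
by apply: eq_bigr => j _; rewrite linearZ !mxE mulrC.
Qed.

Lemma sum_delay_pulse (v : signal R m) k t : (t <= k)%N ->
  v t = (\sum_(s < k.+1) delay s (pulse (v s))) t.
Proof.
move=> tk; rewrite fct_sumE (bigD1 (Ordinal (tk : (t < k.+1)%N))) //= big1 => [|s st].
  by rewrite /delay /pulse ltnn subnn eqxx addr0.
rewrite /delay /pulse; case: ltnP => //= st'; rewrite ifF //; apply/negbTE.
by apply: contra st => /eqP ts; apply/eqP/val_inj => /=; lia.
Qed.

Lemma lticonv_impresp : G =1 lticonv (impresp G).
Proof.
move=> v; apply/funext => k; rewrite (G_causal (@sum_delay_pulse v k)) linear_sum fct_sumE.
rewrite /lticonv [RHS](reindex_inj rev_ord_inj); apply: eq_bigr => s _ /=.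
have sk : (s <= k)%N by rewrite -ltnS.
by rewrite subSS subKn // -pulse_impresp -[RHS](G_ti s) subnK.
Qed.

Lemma impresp_comp p (H : signal R p -> signal R m) :
  impresp (G \o H) = mxconv (impresp G) (impresp H).
Proof.
apply/funext => k; apply/matrixP => i j.
rewrite mxE /= lticonv_impresp /lticonv /mxconv !summxE; apply: eq_bigr => s _.
by rewrite !mxE; apply: eq_bigr => l _; rewrite !mxE.
Qed.

End LTI.
End Signals.

Section TimeLifting.
Variables (R : realType) (F : nat) (HF : (0 < F)%N).

Lemma tliftE n (v : signal R n) l (i : 'I_F) (j : 'I_n) :
  tlift F v l (mxvec_index i j) 0 = v (l * F + i)%N j 0.
Proof. by rewrite /tlift mxE mxvecE mxE. Qed.

Lemma tunliftE n (w : signal R (F * n)) t (j : 'I_n) :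
  tunlift HF w t j 0 = w (t %/ F)%N (mxvec_index (Ordinal (ltn_pmod t HF)) j) 0.
Proof. by rewrite /tunlift !mxE. Qed.

Lemma tunliftK n : cancel (@tlift R n F) (tunlift HF).
Proof. by move=> v; apply/funext => t; apply/colP => j; rewrite tunliftE tliftE -divn_eq. Qed.

Lemma tliftK n : cancel (tunlift HF) (@tlift R n F).
Proof.
move=> w; apply/funext => l; apply/colP => x; case/mxvec_indexP: x => i j.
rewrite tliftE tunliftE divnMDl // divn_small // addn0.
by congr (w l (mxvec_index _ j) 0); apply: val_inj; rewrite /= modnMDl modn_small.
Qed.

Lemma tlift_is_linear n : linear (@tlift R n F).
Proof.
move=> a u v; apply/funext => l; apply/colP => x; case/mxvec_indexP: x => i j.
by rewrite !fctE !(tliftE, mxE).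
Qed.

Lemma tunlift_is_linear n : linear (@tunlift R n F HF).
Proof. by move=> a u v; apply/funext => t; apply/colP => j; rewrite !fctE !(tunliftE, mxE). Qed.

HB.instance Definition _ n :=
  GRing.isLinear.Build R (signal R n) (signal R (F * n)) _ (@tlift R n F) (@tlift_is_linear n).
HB.instance Definition _ n :=
  GRing.isLinear.Build R (signal R (F * n)) (signal R n) _ (@tunlift R n F HF) (@tunlift_is_linear n).

Lemma liftop_is_linear m n (G : {linear signal R m -> signal R n}) : linear (liftop HF G).
Proof. by move=> a u v; rewrite /liftop !linearP. Qed.

HB.instance Definition _ m n (G : {linear signal R m -> signal R n}) :=
  GRing.isLinear.Build R (signal R (F * m)) (signal R (F * n)) _ (liftop HF G) (liftop_is_linear G).

Lemma liftop_can m n (G : signal R m -> signal R n) (H : signal R n -> signal R m) :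
  cancel G H -> cancel (liftop HF G) (liftop HF H).
Proof. by move=> GK w; rewrite /liftop tunliftK GK tliftK. Qed.

Lemma liftop_comp m n p (G : signal R n -> signal R p) (H : signal R m -> signal R n) :
  liftop HF (G \o H) = liftop HF G \o liftop HF H.
Proof. by apply/funext => w; rewrite /liftop /= tunliftK. Qed.

Lemma tunlift_delay n d (w : signal R (F * n)) :
  tunlift HF (delay d w) = delay (d * F) (tunlift HF w).
Proof.
apply/funext => t; apply/colP => j; rewrite tunliftE /delay ltn_divLR //.
case: ltnP => [|dFt]; first by rewrite !mxE.
have [s ->] : exists s, t = (s + d * F)%N by exists (t - d * F)%N; rewrite subnK.
rewrite tunliftE divnDMl // !addnK; congr (w _ (mxvec_index _ j) 0).
by apply: val_inj; rewrite /= addnC modnMDl.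
Qed.

Lemma liftop_causal m n (G : signal R m -> signal R n) :
  causal G -> causal (liftop HF G).
Proof.
move=> G_causal u v k uv; apply/colP => x; case/mxvec_indexP: x => i j.
rewrite !tliftE (G_causal _ (tunlift HF v)) // => t tk.
by rewrite /tunlift uv // -ltnS ltn_divLR // mulSn; have := ltn_ord i; lia.
Qed.

Lemma liftop_time_invariant m n (G : signal R m -> signal R n) :
  time_invariant G -> time_invariant (liftop HF G).
Proof.
move=> G_ti d w t; apply/colP => x; case/mxvec_indexP: x => i j.
by rewrite !tliftE tunlift_delay mulnDl addnAC G_ti.
Qed.

End TimeLifting.

Lemma intertwine_inv (A B : Type) (f : A -> B) (g : A -> A) (h : B -> B)
    (g' : A -> A) (h' : B -> B) :
  cancel h h' -> cancel g' g -> (forall x, f (g x) = h (f x)) ->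
  forall x, h' (f x) = f (g' x).
Proof. by move=> hK g'K fgh x; rewrite -{1}(g'K x) fgh hK. Qed.

Lemma lticonv_loopU (R : realType) F nu ny
    (p : nat -> 'M[R]_(ny, nu)) (k : nat -> 'M[R]_(nu, ny)) u :
  lticonv p (loopU F p k u) = loopY F p k (lticonv p u).
Proof. exact: linearD. Qed.

Theorem theorem1 (R : realType) (F nu ny : nat) (HF : (0 < F)%N)
    (p : nat -> 'M[R]_(ny, nu)) (k : nat -> 'M[R]_(nu, ny))
    (invY : signal R ny -> signal R ny) (invU : signal R nu -> signal R nu)
    (wpY1 : cancel (loopY F p k) invY) (wpY2 : cancel invY (loopY F p k))
    (wpU1 : cancel (loopU F p k) invU) (wpU2 : cancel invU (loopU F p k)) :
  let P : signal R nu -> signal R ny := lticonv p in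
  let J : signal R nu -> signal R ny := fun r => invY (P r) in
  let S : signal R nu -> signal R nu := invU in
  (exists Sinv : signal R (F * nu) -> signal R (F * nu),
      [/\ cancel (liftop HF S) Sinv, cancel Sinv (liftop HF S) &
          forall w, liftop HF P w = liftop HF J (Sinv w)]) /\
  (forall omega : R,
      let z := expj omega in
      ztr_abs (impresp (liftop HF P)) (z ^+ F) ->
      ztr_abs (impresp (liftop HF J)) (z ^+ F) ->
      ztr_abs (impresp (liftop HF S)) (z ^+ F) ->
      freqlift HF S z \in unitmx ->
      freqlift HF P z = freqlift HF J z *m invmx (freqlift HF S z)).
Proof.
move=> P J S.
have J_PS : J = P \o S.
  by apply/funext => r; apply: (intertwine_inv wpY1 wpU2); exact: lticonv_loopU.
have liftJ : liftop HF J = liftop HF P \o liftop HF S by rewrite J_PS liftop_comp.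
split.
  exists (liftop HF (loopU F p k)); split; [exact: liftop_can | exact: liftop_can |].
  by move=> w; rewrite liftJ /= (liftop_can HF wpU1).
move=> omega z hP _ hS S_unit.
have M_unit : Mz F nu z \in unitmx.
  by move: S_unit; rewrite !unitmx_mul => /andP[/andP[]].
have freqJ : freqlift HF J z = freqlift HF P z *m freqlift HF S z.
  rewrite /freqlift liftJ impresp_comp ?ztr_mxconv //.
  - by rewrite !mulmxA mulmxKV.
  - exact/liftop_causal/lticonv_causal.
  - exact/liftop_time_invariant/lticonv_time_invariant.
by rewrite freqJ mulmxK.
Qed.
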